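(* Let $N=1$, assume (H-EL), let $u_0\in\mathcal A$ and let $u$ be the solution of $(P_{u_0})$, with $\operatorname{supp}u=[-\bar r,\bar r]$. Then, as $x\to\bar r^-$, $$u(x)\sim\Big(\tfrac{A(m+1)^2}{2}\Big)^{\frac1{m+1}}(\bar r-x)^{\frac2{m+1}},\qquad u'(x)\sim-\tfrac{2}{m+1}\Big(\tfrac{A(m+1)^2}{2}\Big)^{\frac1{m+1}}(\bar r-x)^{\frac2{m+1}-1}.$$ In particular $u\in H^1_0((-\bar r,\bar r))$.
   Context: Hypothesis (H-EL): $Q\in C^1((0,+\infty))$, $Q\equiv0$ on $(-\infty,0]$, $\inf Q>-\infty$, $Q(u)\sim Au^{1-m}$ as $u\to0^+$ with $A>0$, $1<m<3$, and $|sQ'(s)|\le CQ(s)$ for small $s>0$. $R(s)=Q(s)/s$. $(P_{u_0})$: $-u''+Q'(u)=R(u_0)$ in $\{u>0\}$, $u(0)=u_0$, $u'(0)=0$. $\mathcal A=\{s>0: R'(s)<0,\ R(t)>R(s)\ \forall t\in(0,s)\}$; for $u_0\in\mathcal A$ the solution of $(P_{u_0})$ is even with compact support $[-\bar r,\bar r]$ and strictly decreasing on $(0,\bar r)$. *)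

From HB Require Import structures.
From mathcomp Require Import all_boot all_order all_algebra.
From mathcomp Require Import all_classical all_reals all_analysis.
Set Implicit Arguments. Unset Strict Implicit. Unset Printing Implicit Defensive.
Import Order.TTheory GRing.Theory Num.Theory.
Import numFieldNormedType.Exports.
Local Open Scope classical_set_scope.
Local Open Scope ring_scope.

Definition Rq {R : realType} (Q : R -> R) (s : R) : R := Q s / s.

Definition H_EL {R : realType} (Q : R -> R) (A m : R) : Prop :=
  [/\ (forall x, 0 < x -> derivable Q x 1 /\ {for x, continuous (derive1 Q)}),
      (forall x, x <= 0 -> Q x = 0) /\ (exists M, forall s, M <= Q s),
      [/\ 0 < A, 1 < m & m < 3],
      (fun s => Q s / (A * powR s (1 - m))) s @[s --> 0^'+] --> (1 : R)
    & exists C, exists2 d, 0 < d & forall s, 0 < s < d -> `|s * (derive1 Q) s| <= C * Q s].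

Definition setA {R : realType} (Q : R -> R) : set R :=
  [set s | 0 < s /\ derive1 (Rq Q) s < 0 /\ (forall t, 0 < t < s -> Rq Q t > Rq Q s)].

Definition is_solution_P {R : realType} (Q : R -> R) (u0 : R) (u : R -> R) (rbar : R) : Prop :=
  [/\ 0 < rbar /\ continuous u,
      (forall x, (0 < u x) <-> (`|x| < rbar)) /\
      (forall x, rbar <= `|x| -> u x = 0),
      (forall x, `|x| < rbar ->
          [/\ derivable u x 1, derivable (derive1 u) x 1 &
              - derive1 (derive1 u) x + (derive1 Q) (u x) = Rq Q u0]),
      (u 0 = u0 /\ (derive1 u) 0 = 0) /\ (forall x, u (- x) = u x)
    & (forall x y, 0 < x -> x < y -> y < rbar -> u y < u x)].

From HB Require Import structures.
From mathcomp Require Import all_boot all_order all_algebra.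
From mathcomp Require Import all_classical all_reals all_analysis.
From mathcomp Require Import ring lra.
From mathcomp Require Import measurable_realfun.

Set Implicit Arguments.
Unset Strict Implicit.
Unset Printing Implicit Defensive.

Import Order.TTheory GRing.Theory Num.Theory.
Import numFieldNormedType.Exports.
Local Open Scope classical_set_scope.
Local Open Scope ring_scope.

(* Multiplying the equation by u' and using u'(0) = 0 gives the first integral
   u'^2 = 2 (Q(u) - λ u), λ = R(u0).  With p = (m + 1)/2, the function
   ψ = -(u^p)' satisfies ψ^2 = p^2 u^(m-1) u'^2 -> 2 A p^2 =: L^2 as x -> rbar,
   since u -> 0 and Q(s) ~ A s^(1-m).  By l'Hôpital u^p(x) / (rbar - x) -> L,
   which is the asymptotics of u, and u' = -ψ u^(1-p) / p then gives that of u'.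
   Finally ψ is bounded near rbar, so u'^2 <= M + C u^(1-p) |u'|, and
   u^(1-p) |u'| = ∓ (u^(2-p))' / (2 - p) on each half of the support: as p < 2
   (i.e. m < 3) the bound has a primitive continuous up to ±rbar, and u'^2 is
   integrable. *)

Section real_lemmas.
Context {R : realType}.
Local Notation mu := (@lebesgue_measure R).

Lemma near_at_leftP (b : R) (P : R -> Prop) :
  (\forall x \near b^'-, P x) <-> exists2 a, a < b & forall x, a < x < b -> P x.
Proof.
split.
  rewrite nbhs_left0P => -[d /= d_gt0 Pd].
  exists (b - d) => [|x /andP[dx xb]]; first by rewrite ltrBlDr ltrDl.
  have -> : x = b - (b - x) by ring.
  apply: Pd; last by rewrite subr_gt0.
  by rewrite /ball /= sub0r normrN ger0_norm; lra.
move=> [a ab Pa]; near=> x; apply: Pa; apply/andP; split.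
  by near: x; exact: nbhs_left_gt.
by near: x; exact: nbhs_left_lt.
Unshelve. all: by end_near. Qed.

Lemma is_derive_continuous (f : R -> R) (x df : R) :
  is_derive x 1 f df -> {for x, continuous f}.
Proof. by case=> fx _; apply/differentiable_continuous/derivable1_diffP. Qed.

Lemma is_derive1_eq (f : R -> R) (x df : R) : is_derive x 1 f df -> derive1 f x = df.
Proof. by move=> fx; rewrite derive1E; exact: derive_val. Qed.

Lemma continuous_itv_oo_measurable_EFin (g : R -> R) (a b : R) (D : set R) :
  {in `]a, b[, continuous g} -> D `<=` `]a, b[ -> measurable_fun D (EFin \o g).
Proof.
move=> cg Dab; apply/measurable_EFinP.
apply: (measurable_funS (E := `]a, b[)) => //.
apply: open_continuous_measurable_fun; first exact: interval_open.
by move=> z; rewrite inE; exact: cg.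
Qed.

Lemma is_derive_0_itv_cst (f : R -> R) (a b x y : R) :
  (forall z, z \in `]a, b[ -> is_derive z 1 f 0) ->
  x \in `]a, b[ -> y \in `]a, b[ -> f x = f y.
Proof.
move=> df; wlog xy : x y / x <= y.
  by move=> H xab yab; have [/H|/ltW/H] := leP x y; [apply | move=> /(_ yab xab)].
rewrite !in_itv /= => /andP[ax _] /andP[_ yb].
have xy_ab z : z \in `[x, y] -> z \in `]a, b[.
  by rewrite !in_itv /= => /andP[? ?]; apply/andP; split; lra.
have [|c _] := MVT_segment xy (fun z zxy => df z (xy_ab z (subset_itv_oo_cc zxy))).
  by apply: derivable_within_continuous => z /xy_ab /df[].
by rewrite mul0r => /eqP; rewrite subr_eq0 => /eqP.
Qed.

Lemma powR_continuous_gt0 (r a : R) : 0 < a -> {for a, continuous (fun y : R => y `^ r)}.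
Proof.
move=> a_gt0; apply/differentiable_continuous/derivable1_diffP.
by apply: derivable_powR; rewrite in_itv /= a_gt0.
Qed.

Lemma powR_cvg0_ge0 (T : Type) (F : set_system T) (FF : Filter F) (g : T -> R) (r : R) :
  0 < r -> (forall t, 0 <= g t) -> g t @[t --> F] --> 0 -> g t `^ r @[t --> F] --> 0.
Proof.
move=> r_gt0 g_ge0 /cvgrPdist_lt g0; apply/cvgrPdist_lt => e e_gt0.
have de_gt0 : 0 < e `^ r^-1 by rewrite powR_gt0.
have e_eq : e = (e `^ r^-1) `^ r by rewrite -powRrM mulVf ?gt_eqF // powRr1 // ltW.
apply: filterS (g0 _ de_gt0) => t; rewrite !sub0r !normrN !ger0_norm ?powR_ge0 // => gt_lt.
by rewrite e_eq gt0_ltr_powR ?nnegrE ?powR_ge0.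
Qed.

Lemma integral_itv_cc_le_derive (f F F' : R -> R) (a b : R) : a < b ->
  (forall x, x \in `]a, b[ -> is_derive x 1 F (F' x)) ->
  {in `]a, b[, continuous F'} ->
  F x @[x --> a^'+] --> F a -> F x @[x --> b^'-] --> F b ->
  {in `]a, b[, continuous f} ->
  (forall x, x \in `]a, b[ -> 0 <= f x <= F' x) ->
  forall x y, a < x -> x < y -> y < b ->
  (\int[mu]_(z in `[x, y]) (f z)%:E <= (F b - F a)%:E)%E.
Proof.
move=> ab dF cF' Fa Fb cf fF' x y ax xy yb.
have F_ndecr s t : a <= s -> s <= t -> t <= b -> F s <= F t.
  apply: ger0_derive1_ndecr => [z /dF[]//|z zab|].
    by rewrite (is_derive1_eq (dF z zab)); case/andP: (fF' z zab) => /le_trans; apply.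
  apply: derivable_oo_LRcontinuous_within; by split => // z /dF[].
have xy_ab' z : z \in `[x, y] -> z \in `]a, b[.
  by rewrite !in_itv /= => /andP[xz zy]; apply/andP; split; lra.
have ftc : (\int[mu]_(z in `[x, y]) (F' z)%:E = (F y - F x)%:E)%E.
  rewrite (@continuous_FTC2 _ _ F) ?EFinB //.
  - by apply: continuous_in_subspaceT => z /set_mem /xy_ab' /cF'.
  - split.
    + by move=> z /subset_itv_oo_cc /xy_ab' /dF [].
    + apply: cvg_at_right_filter; apply: (is_derive_continuous (dF x _)).
      by rewrite in_itv /= ax (lt_trans xy yb).
    + apply: cvg_at_left_filter; apply: (is_derive_continuous (dF y _)).
      by rewrite in_itv /= yb (lt_trans ax xy).
  - by move=> z /subset_itv_oo_cc /xy_ab' /dF /is_derive1_eq.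
apply: (@le_trans _ _ (\int[mu]_(z in `[x, y]) (F' z)%:E)%E).
  apply: ge0_le_integral => //; [|exact: continuous_itv_oo_measurable_EFin xy_ab'..|];
    by move=> z /xy_ab' /fF' /andP[? ?]; rewrite lee_fin.
rewrite ftc lee_fin lerB //; apply: F_ndecr; lra.
Qed.

Lemma ge0_integral_itv_oo_le_derive (f F F' : R -> R) (a b : R) : a < b ->
  (forall x, x \in `]a, b[ -> is_derive x 1 F (F' x)) ->
  {in `]a, b[, continuous F'} ->
  F x @[x --> a^'+] --> F a -> F x @[x --> b^'-] --> F b ->
  {in `]a, b[, continuous f} ->
  (forall x, x \in `]a, b[ -> 0 <= f x <= F' x) ->
  (\int[mu]_(x in `]a, b[) (f x)%:E <= (F b - F a)%:E)%E.
Proof.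
move=> ab dF cF' Fa Fb cf fF'.
pose d n := (b - a) / 3 / n.+1%:R.
have d_gt0 n : 0 < d n by rewrite !divr_gt0 ?subr_gt0.
have d_le n : d n <= (b - a) / 3.
  rewrite /d ler_pdivrMr ?ltr0n //.
  have : 1 <= n.+1%:R :> R by rewrite ler1n.
  have : 0 < (b - a) / 3 by rewrite divr_gt0 ?subr_gt0.
  nra.
pose I n : set R := `[a + d n, b - d n]%classic.
have I_nd : {homo I : n k / (n <= k)%N >-> (n <= k)%O}.
  move=> n k nk; rewrite subsetEset => x; rewrite /I /= !in_itv /= => /andP[adx xbd].
  have : d k <= d n by rewrite /d ler_pM2l ?divr_gt0 ?subr_gt0 // lef_pV2 ?posrE ?ler_nat.
  by move=> dkn; apply/andP; split; lra.
have I_ab n : I n `<=` `]a, b[.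
  by move=> x; rewrite /I /= !in_itv /= => /andP[adx xbd]; have := d_gt0 n; lra.
have I_cup : `]a, b[%classic = \bigcup_n I n.
  apply/seteqP; split => [x|x [n _ /I_ab]//].
  rewrite /= in_itv /= => /andP[ax xb].
  have e_gt0 : 0 < 3 * Num.min (x - a) (b - x) / (b - a).
    by rewrite !divr_gt0 ?mulr_gt0 ?lt_min ?subr_gt0 ?ax.
  have [n _ /(_ n (leqnn n)) /= ne] := near_infty_natSinv_lt (PosNum e_gt0).
  exists n => //; rewrite /I /= in_itv /=.
  have : d n < Num.min (x - a) (b - x).
    rewrite [ltRHS](_ : _ = (b - a) / 3 * (3 * Num.min (x - a) (b - x) / (b - a))).
      by rewrite /d ltr_pM2l // divr_gt0 ?subr_gt0.
    by field; rewrite subr_eq0 gt_eqF.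
  by rewrite lt_min => /andP[? ?]; apply/andP; split; lra.
have cvgI := @ge0_nondecreasing_set_cvg_integral _ _ _ _ _ mu I_nd (fun n => measurable_itv _)
  (fun n => continuous_itv_oo_measurable_EFin cf (I_ab n))
  (fun n x Inx => proj1 (andP (fF' x (I_ab n x Inx)))).
rewrite I_cup -(cvg_lim _ cvgI) //; apply: lime_le; first exact: cvgP cvgI.
apply: nearW => n; have := d_gt0 n; have := d_le n.
by move=> ? ?; apply: integral_itv_cc_le_derive; rewrite ?ab //; lra.
Qed.

End real_lemmas.

Section boundary_behaviour.
Context {R : realType} (Q : R -> R) (A m u0 : R) (u : R -> R) (rbar : R).
Local Notation mu := (@lebesgue_measure R).
Local Notation u' := (derive1 u).
Hypotheses (A_gt0 : 0 < A) (m_gt1 : 1 < m) (m_lt3 : m < 3).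
Hypothesis Q_derivable : forall s, 0 < s -> derivable Q s 1.
Hypothesis Q_sim : (fun s => Q s / (A * powR s (1 - m))) s @[s --> 0^'+] --> (1 : R).
Hypotheses (rbar_gt0 : 0 < rbar) (u_cont : continuous u).
Hypothesis u_gt0 : forall x, (0 < u x) <-> (`|x| < rbar).
Hypothesis u_out : forall x, rbar <= `|x| -> u x = 0.
Hypothesis u_ode : forall x, `|x| < rbar ->
  [/\ derivable u x 1, derivable u' x 1 & - derive1 u' x + derive1 Q (u x) = Rq Q u0].
Hypotheses (u_0 : u 0 = u0) (u'_0 : u' 0 = 0) (u_even : forall x, u (- x) = u x).
Hypothesis u_decr : forall x y, 0 < x -> x < y -> y < rbar -> u y < u x.

Let lam := Rq Q u0.
Let p := (m + 1) / 2.
Let L := Num.sqrt (2 * A * p ^+ 2).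

Let p_gt1 : 1 < p. Proof. by rewrite /p ltr_pdivlMr // mul1r; move: m_gt1; lra. Qed.
Let p_gt0 : 0 < p. Proof. exact: lt_trans p_gt1. Qed.
Let p_lt2 : p < 2. Proof. by rewrite /p ltr_pdivrMr //; move: m_lt3; lra. Qed.
Let L2_gt0 : 0 < 2 * A * p ^+ 2.
Proof. by apply: mulr_gt0; [apply: mulr_gt0 | apply: exprn_gt0]. Qed.
Let L_gt0 : 0 < L. Proof. by rewrite sqrtr_gt0. Qed.

Let u_rbar : u rbar = 0. Proof. by rewrite u_out // ger0_norm // ltW. Qed.

Lemma u_ge0 (x : R) : 0 <= u x.
Proof. by have [/u_gt0/ltW|/u_out->] := ltP `|x| rbar. Qed.

Lemma is_derive_u (x : R) : `|x| < rbar -> is_derive x 1 u (u' x).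
Proof. by case/u_ode => /derivableP; rewrite -derive1E. Qed.

Lemma is_derive_derive1_u (x : R) : `|x| < rbar -> is_derive x 1 u' (derive1 u' x).
Proof. by case/u_ode => _ /derivableP; rewrite -derive1E. Qed.

Lemma derive1_u_continuous (x : R) : `|x| < rbar -> {for x, continuous u'}.
Proof. by case/u_ode => _ u'_der _; apply/differentiable_continuous/derivable1_diffP. Qed.

Lemma energy_identity (x : R) : `|x| < rbar -> u' x ^+ 2 = 2 * (Q (u x) - lam * u x).
Proof.
pose E := u' ^+ 2 - 2 \*: (Q \o u) + (2 * lam) \*: u.
have E_eq y : E y = u' y ^+ 2 - 2 * Q (u y) + 2 * lam * u y by [].
have u0_gt0 : 0 < u0 by rewrite -u_0 u_gt0 normr0.
have dE y : y \in `]- rbar, rbar[ -> is_derive y 1 E 0.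
  rewrite in_itv /= -ltr_norml => y_in.
  have uy_gt0 : 0 < u y by exact/u_gt0.
  have dQ := derivableP (Q_derivable uy_gt0); rewrite -derive1E in dQ.
  have dQu := is_derive1_comp dQ (is_derive_u y_in).
  have := is_deriveD (is_deriveB (is_deriveX 2 (is_derive_derive1_u y_in))
    (is_deriveZ 2 dQu)) (is_deriveZ (2 * lam) (is_derive_u y_in)).
  move/is_derive_eq; apply; case: (u_ode y_in) => _ _ ode.
  have -> : derive1 u' y = derive1 Q (u y) - lam by rewrite /lam -ode; ring.
  by rewrite /GRing.scale /= expr1; ring.
have E0 : E 0 = 0 by rewrite E_eq u'_0 u_0 /lam /Rq; field; rewrite gt_eqF.
move=> x_in; have : E x = E 0.
  by apply: (is_derive_0_itv_cst dE); rewrite in_itv /= -ltr_norml ?normr0.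
rewrite E0 E_eq => /eqP; rewrite -subr_eq0 => /eqP Ex.
by apply/eqP; rewrite -subr_eq0 -Ex; apply/eqP; ring.
Qed.

Lemma derive1_u_le0 (x : R) : 0 < x < rbar -> u' x <= 0.
Proof.
move=> x_in; apply: (@decr_derive1_le0_itv _ u false true 0 rbar); last by rewrite in_itv.
- move=> z; rewrite inE /= in_itv /= => /andP[z0 zr].
  by have /u_ode[] : `|z| < rbar by rewrite gtr0_norm.
- move=> a b; rewrite !in_itv /= => /andP[_ ar] /andP[b0 _] ba.
  exact: u_decr b0 ba ar.
Qed.

Lemma derive1_u_ge0 (x : R) : - rbar < x < 0 -> 0 <= u' x.
Proof.
move=> x_in; apply: (@incr_derive1_ge0_itv _ u false true (- rbar) 0); last by rewrite in_itv.
- move=> z; rewrite inE /= in_itv /= => /andP[rz z0].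
  by have /u_ode[] : `|z| < rbar by rewrite ltr0_norm // ltrNl.
- move=> a b; rewrite !in_itv /= => /andP[ra _] /andP[_ b0] ab.
  rewrite -(u_even a) -(u_even b); apply: u_decr; lra.
Qed.

Lemma u_cvg0 : u x @[x --> rbar^'-] --> 0^'+.
Proof.
have u_cvg : u x @[x --> rbar^'-] --> 0.
  by rewrite -u_rbar; apply: cvg_at_left_filter; exact: u_cont.
have u_pos : \forall x \near rbar^'-, 0 < u x.
  near=> x; apply/u_gt0; rewrite gtr0_norm; first by near: x; exact: nbhs_left_lt.
  by near: x; exact: nbhs_left_gt.
move=> P /u_cvg; apply: filterS2 u_pos => x ux_gt0; exact.
Unshelve. all: by end_near. Qed.

Lemma powR_u_continuous (r : R) : 0 < r -> continuous (fun x => u x `^ r).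
Proof.
move=> r_gt0 x; have [ux_gt0|ux0] := ltrP 0 (u x).
  exact: continuous_comp (@u_cont x) (powR_continuous_gt0 ux_gt0).
have {}ux0 : u x = 0 by apply/eqP; rewrite eq_le ux0 u_ge0.
have u_cvg0 : u y @[y --> x] --> 0 by rewrite -ux0; exact: u_cont.
rewrite /continuous_at ux0 powR0 ?gt_eqF //.
exact: powR_cvg0_ge0 r_gt0 u_ge0 u_cvg0.
Qed.

Lemma is_derive_powR_u (r x : R) : `|x| < rbar ->
  is_derive x 1 (fun y => u y `^ r) (r * u x `^ (r - 1) * u' x).
Proof.
move=> x_in; have ux_gt0 : 0 < u x by exact/u_gt0.
exact: is_derive1_comp (is_derive1_powR r ux_gt0) (is_derive_u x_in).
Qed.

Lemma Q_mul_powR_cvg : Q s * s `^ (m - 1) @[s --> 0^'+] --> A.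
Proof.
have e : \forall s \near 0^'+, A * (Q s / (A * s `^ (1 - m))) = Q s * s `^ (m - 1).
  near=> s; have s_gt0 : 0 < s by near: s; exact: nbhs_right_gt.
  rewrite -opprB powRN; field.
  by rewrite !gt_eqF ?powR_gt0.
apply: cvg_trans (near_eq_cvg e) _.
by have := cvgMl_tmp (a := A) Q_sim; rewrite mulr1; apply.
Unshelve. all: by end_near. Qed.

Let psi (x : R) := - (p * u x `^ (p - 1) * u' x).

Lemma psi_ge0 (x : R) : 0 < x < rbar -> 0 <= psi x.
Proof.
move=> x_in; rewrite /psi oppr_ge0 mulr_ge0_le0 ?derive1_u_le0 //.
by rewrite mulr_ge0 ?powR_ge0 // ltW.
Qed.

Lemma sqr_psi (x : R) : `|x| < rbar ->
  psi x ^+ 2 = p ^+ 2 * (2 * (Q (u x) * u x `^ (m - 1) - lam * u x `^ m)).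
Proof.
move=> x_in; have ux_gt0 : 0 < u x by exact/u_gt0.
have sqr_powR : (u x `^ (p - 1)) ^+ 2 = u x `^ (m - 1).
  by rewrite -powR_mulrn ?powR_ge0 // -powRrM; congr powR; rewrite /p; field.
have powR_m : u x `^ m = u x * u x `^ (m - 1).
  by rewrite mulr_powRB1 ?(ltW ux_gt0) //; move: m_gt1; lra.
by rewrite /psi sqrrN !exprMn sqr_powR energy_identity // powR_m; ring.
Qed.

Lemma psi_cvg : psi x @[x --> rbar^'-] --> L.
Proof.
have sqr_psi_in_u_cvg :
    p ^+ 2 * (2 * (Q s * s `^ (m - 1) - lam * s `^ m)) @[s --> 0^'+] --> 2 * A * p ^+ 2.
  rewrite (_ : 2 * A * p ^+ 2 = p ^+ 2 * (2 * (A - lam * 0))); last by ring.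
  apply: cvgMl_tmp; apply: cvgMl_tmp; apply: cvgB; first exact: Q_mul_powR_cvg.
  by apply: cvgMl_tmp; apply: powR_cvg0; move: m_gt1; lra.
have e : \forall x \near rbar^'-,
    Num.sqrt (p ^+ 2 * (2 * (Q (u x) * u x `^ (m - 1) - lam * u x `^ m))) = psi x.
  near=> x; have x_in : 0 < x < rbar.
    by apply/andP; split; near: x; [exact: nbhs_left_gt | exact: nbhs_left_lt].
  have /andP[x_gt0 x_lt] := x_in.
  by rewrite -sqr_psi ?gtr0_norm // sqrtr_sqr ger0_norm // psi_ge0.
apply: cvg_trans (near_eq_cvg e) _.
exact: cvg_comp _ _ (cvg_comp _ _ u_cvg0 sqr_psi_in_u_cvg) (@sqrt_continuous _ _).
Unshelve. all: by end_near. Qed.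

Let phi (x : R) := u x `^ p / (rbar - x).

Lemma phi_cvg : phi x @[x --> rbar^'-] --> L.
Proof.
apply: (@lhopital_at_left R _ (fun x => - psi x) _ (fun=> -1) 0 rbar) => //.
- move=> x; rewrite in_itv /= => /andP[x_gt0 x_lt].
  by rewrite /psi opprK; apply: is_derive_powR_u; rewrite gtr0_norm.
- move=> x _; apply: is_derive_eq (is_deriveB (is_derive_cst rbar x 1) (is_derive_id x 1)) _.
  by rewrite sub0r.
- have := powR_u_continuous p_gt0 (x := rbar).
  by rewrite /continuous_at u_rbar powR0 ?gt_eqF //; exact: cvg_at_left_filter.
- rewrite -(subrr rbar); apply: cvg_at_left_filter.
  by apply: cvgB; [exact: cvg_cst | exact: cvg_id].
- by apply: cvg_trans psi_cvg; apply: near_eq_cvg; near=> x; rewrite invrN1 mulrN1 opprK.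
Unshelve. all: by end_near. Qed.

Let K := powR (A * (m + 1) ^+ 2 / 2) (1 / (m + 1)).

Let inv_p : 2 / (m + 1) = p^-1.
Proof. by rewrite /p invf_div. Qed.

Lemma K_eq : K = L `^ p^-1.
Proof.
rewrite /L -powR12_sqrt ?(ltW L2_gt0) // -powRrM /K.
by congr powR; rewrite /p; field; move: m_gt1; lra.
Qed.

Let K_gt0 : 0 < K. Proof. by rewrite K_eq powR_gt0. Qed.

Lemma phi_gt0 (x : R) : 0 < x < rbar -> 0 < phi x.
Proof.
move=> /[dup] x_in /andP[_ x_lt]; rewrite divr_gt0 ?subr_gt0 ?powR_gt0 //.
by apply/u_gt0; rewrite gtr0_norm //; case/andP: x_in.
Qed.

Lemma powR_u_eq (r x : R) : 0 < x < rbar ->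
  u x `^ r = phi x `^ (p^-1 * r) * (rbar - x) `^ (p^-1 * r).
Proof.
move=> /[dup] x_in /andP[x_gt0 x_lt].
rewrite -powRM ?(ltW (phi_gt0 x_in)) ?subr_ge0 ?(ltW x_lt) //.
by rewrite /phi divfK ?subr_eq0 ?gt_eqF // -!powRrM mulrA mulfV ?gt_eqF // mul1r.
Qed.

Lemma u_sim :
  (fun x => u x / (K * powR (rbar - x) (2 / (m + 1)))) x @[x --> rbar^'-] --> (1 : R).
Proof.
have e : \forall x \near rbar^'-, phi x `^ p^-1 / K = u x / (K * (rbar - x) `^ (2 / (m + 1))).
  near=> x; have x_in : 0 < x < rbar.
    by apply/andP; split; near: x; [exact: nbhs_left_gt | exact: nbhs_left_lt].
  have /andP[_ x_lt] := x_in.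
  rewrite inv_p -[u x](powRr1 (u_ge0 x)) (powR_u_eq 1 x_in) mulr1; field.
  by rewrite (gt_eqF K_gt0) gt_eqF ?powR_gt0 ?subr_gt0.
apply: cvg_trans (near_eq_cvg e) _.
have := cvgMr_tmp (b := K^-1)
  (cvg_comp _ _ phi_cvg (powR_continuous_gt0 (r := p^-1) L_gt0)).
by rewrite -K_eq mulfV ?lt0r_neq0 //; apply.
Unshelve. all: by end_near. Qed.

Lemma derive1_u_eq (x : R) : 0 < x < rbar -> u' x = - (p^-1 * psi x * u x `^ (1 - p)).
Proof.
move=> /andP[x_gt0 x_lt]; have ux_gt0 : 0 < u x by apply/u_gt0; rewrite gtr0_norm.
have powR_inv : u x `^ (p - 1) * u x `^ (1 - p) = 1.
  rewrite -powRD; last by rewrite (gt_eqF ux_gt0) implybT.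
  by rewrite (_ : p - 1 + (1 - p) = 0) ?powRr0 //; ring.
by rewrite -[u' x in LHS]mul1r -{1}powR_inv /psi; field; rewrite lt0r_neq0.
Qed.

Lemma derive1_u_sim :
  (fun x => u' x / (- (2 / (m + 1)) * K * powR (rbar - x) (2 / (m + 1) - 1)))
    x @[x --> rbar^'-] --> (1 : R).
Proof.
have e : \forall x \near rbar^'-, psi x * phi x `^ (p^-1 - 1) / K =
    u' x / (- (2 / (m + 1)) * K * (rbar - x) `^ (2 / (m + 1) - 1)).
  near=> x; have x_in : 0 < x < rbar.
    by apply/andP; split; near: x; [exact: nbhs_left_gt | exact: nbhs_left_lt].
  have /andP[_ x_lt] := x_in.
  have exp_eq : p^-1 * (1 - p) = p^-1 - 1 by rewrite mulrBr mulr1 mulVf ?gt_eqF.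
  rewrite inv_p (derive1_u_eq x_in) (powR_u_eq _ x_in) exp_eq; field.
  by rewrite (lt0r_neq0 K_gt0) (lt0r_neq0 p_gt0) lt0r_neq0 ?powR_gt0 ?subr_gt0.
apply: cvg_trans (near_eq_cvg e) _.
have L_K : L * L `^ (p^-1 - 1) = K.
  rewrite K_eq -{1}(powRr1 (ltW L_gt0)) -powRD; last by rewrite (gt_eqF L_gt0) implybT.
  by rewrite addrC subrK.
have := cvgMr_tmp (b := K^-1)
  (cvgM psi_cvg (cvg_comp _ _ phi_cvg (powR_continuous_gt0 (r := p^-1 - 1) L_gt0))).
by rewrite L_K mulfV ?lt0r_neq0 //; apply.
Unshelve. all: by end_near. Qed.

Lemma sqr_derive1_u_even (x : R) : `|x| < rbar -> u' (- x) ^+ 2 = u' x ^+ 2.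
Proof.
by move=> x_in; rewrite !energy_identity ?normrN // u_even.
Qed.

Lemma norm_derive1_u_even (x : R) : `|x| < rbar -> `|u' (- x)| = `|u' x|.
Proof. by move=> x_in; rewrite -!sqrtr_sqr sqr_derive1_u_even. Qed.

Lemma sqr_derive1_u_eq (x : R) : 0 < x < rbar ->
  u' x ^+ 2 = psi x / p * (u x `^ (1 - p) * `|u' x|).
Proof.
move=> x_in; rewrite ler0_norm ?derive1_u_le0 // expr2 {1}(derive1_u_eq x_in).
by rewrite mulrC; field; rewrite lt0r_neq0.
Qed.

Lemma sqr_derive1_u_le : exists M c, [/\ 0 <= M, 0 <= c & forall x, `|x| < rbar ->
  u' x ^+ 2 <= M + c * (u x `^ (1 - p) * `|u' x|)].
Proof.
have [a a_lt psi_le] : exists2 a, a < rbar & forall x, a < x < rbar -> psi x <= L + 1.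
  apply/near_at_leftP; have /cvgrPdist_lt /(_ 1 ltr01) := psi_cvg.
  by apply: filterS => x; rewrite ltr_distlC => /andP[_ /ltW].
pose b := Num.max a (rbar / 2).
have b_gt0 : 0 < b by rewrite lt_max divr_gt0 ?orbT.
have b_lt : b < rbar by rewrite gt_max a_lt ltr_pdivrMr //; move: rbar_gt0; lra.
have u'_cont : {within `[0, b], continuous (fun x => u' x ^+ 2)}.
  apply: continuous_in_subspaceT => x; rewrite inE /= in_itv /= => /andP[x_ge0 x_le].
  have x_in : `|x| < rbar by rewrite ger0_norm //; lra.
  by apply: cvgM; exact: derive1_u_continuous.
have [c0 _ u'_max] := EVT_max (ltW b_gt0) u'_cont.
pose c := (L + 1) / p.
have c_ge0 : 0 <= c by rewrite divr_ge0 // ltW // addr_gt0.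
exists (u' c0 ^+ 2), c; split => //; first exact: sqr_ge0.
suff bound_ge0 y : 0 <= y < rbar -> u' y ^+ 2 <= u' c0 ^+ 2 + c * (u y `^ (1 - p) * `|u' y|).
  move=> x x_in; have [x_ge0|x_lt0] := leP 0 x.
    by apply: bound_ge0; rewrite x_ge0 -[x]ger0_norm.
  rewrite -sqr_derive1_u_even // -norm_derive1_u_even // -(u_even x).
  by apply: bound_ge0; move: x_in; rewrite ltr0_norm // => ?; apply/andP; split; lra.
move=> /andP[y_ge0 y_lt].
have rest_ge0 : 0 <= c * (u y `^ (1 - p) * `|u' y|).
  by apply: mulr_ge0 => //; apply: mulr_ge0; rewrite ?powR_ge0.
have [y_le|y_gt] := leP y b.
  by rewrite -[leLHS]addr0 lerD //; apply: u'_max; rewrite in_itv /= y_ge0.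
have y_in : 0 < y < rbar by apply/andP; split => //; lra.
rewrite sqr_derive1_u_eq // -[leLHS]add0r lerD ?sqr_ge0 // mulrC [leRHS]mulrC ler_wpM2l //.
  by rewrite mulr_ge0 ?powR_ge0.
rewrite ler_pM2r ?invr_gt0 //; apply: psi_le; apply/andP; split => //.
by rewrite (le_lt_trans _ y_gt) // le_max lexx.
Qed.

Lemma integral_sqr_derive1_u_lt_pinfty (M c s a b : R) :
  (forall x, `|x| < rbar -> u' x ^+ 2 <= M + c * (u x `^ (1 - p) * `|u' x|)) ->
  - rbar <= a -> a < b -> b <= rbar ->
  (forall x, a < x < b -> `|u' x| = - (s * u' x)) ->
  (\int[mu]_(x in `]a, b[) (u' x ^+ 2)%:E < +oo)%E.
Proof.
move=> bound ra ab br sgn.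
have ab_D x : x \in `]a, b[ -> `|x| < rbar.
  by rewrite in_itv /= ltr_norml => /andP[ax xb]; apply/andP; split; lra.
pose F x := M * x - s * (c / (2 - p)) * u x `^ (2 - p).
pose F' x := M - s * c * (u x `^ (1 - p) * u' x).
have F_cont : continuous F.
  move=> x; apply: cvgB; apply: cvgMl_tmp; first exact: cvg_id.
  by apply: powR_u_continuous; rewrite subr_gt0.
apply: le_lt_trans (ltry (F b - F a)).
apply: (@ge0_integral_itv_oo_le_derive _ (fun x => u' x ^+ 2) F F' a b ab).
- move=> x /ab_D x_in.
  have := is_deriveB (is_deriveZ M (is_derive_id x 1))
    (is_deriveZ (s * (c / (2 - p))) (is_derive_powR_u (2 - p) x_in)).
  move/is_derive_eq; apply; rewrite /F' /GRing.scale /= (_ : 2 - p - 1 = 1 - p); last by ring.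
  by field; rewrite lt0r_neq0 // subr_gt0.
- move=> x /ab_D x_in; have ux_gt0 : 0 < u x by exact/u_gt0.
  apply: cvgB; first exact: cvg_cst.
  apply: cvgMl_tmp; apply: cvgM; last exact: derive1_u_continuous.
  exact: continuous_comp (@u_cont x) (powR_continuous_gt0 ux_gt0).
- exact/cvg_at_right_filter/F_cont.
- exact/cvg_at_left_filter/F_cont.
- by move=> x /ab_D x_in; apply: cvgM; exact: derive1_u_continuous.
- move=> x /[dup] /ab_D x_in; rewrite in_itv /= => x_ab.
  rewrite sqr_ge0 /= /F' (le_trans (bound x x_in)) // sgn // le_eqVlt.
  by apply/orP; left; apply/eqP; ring.
Qed.

Lemma integrable_sqr_derive1_u :
  mu.-integrable `]- rbar, rbar[ (fun x => (u' x ^+ 2)%:E).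
Proof.
have [M [c [_ _ bound]]] := sqr_derive1_u_le.
have mf : measurable_fun `]- rbar, rbar[ (fun x => (u' x ^+ 2)%:E).
  apply: (@continuous_itv_oo_measurable_EFin _ _ (- rbar) rbar) => // x.
  by rewrite in_itv /= -ltr_norml => x_in; apply: cvgM; exact: derive1_u_continuous.
apply/integrableP; split => //.
under eq_integral do rewrite gee0_abs ?lee_fin ?sqr_ge0 //.
have r0 : (BRight (- rbar) <= BRight 0)%O by rewrite bnd_simp oppr_le0 ltW.
have r1 : (BRight 0 <= BLeft rbar)%O by rewrite bnd_simp.
rewrite (itv_bndbnd_setU r0 r1) ge0_integral_setU //=; first last.
- apply/disj_set2P; rewrite -subset0 => x /=; rewrite !in_itv /=.
  by case=> /andP[_ x_le0] /andP[x_gt0 _]; move: x_le0; rewrite leNgt x_gt0.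
- by move=> x _; rewrite lee_fin sqr_ge0.
- by rewrite -(itv_bndbnd_setU r0 r1).
rewrite integral_itv_bndoo; last first.
  apply: measurable_funS mf => // x /=; rewrite !in_itv /= => /andP[-> x_lt0].
  exact: lt_trans x_lt0 _.
apply: lte_add_pinfty.
- apply: (integral_sqr_derive1_u_lt_pinfty (s := -1) bound) => [||| x x_in].
  + exact: lexx.
  + by rewrite oppr_lt0.
  + exact: ltW.
  + by rewrite mulN1r opprK ger0_norm // derive1_u_ge0.
- apply: (integral_sqr_derive1_u_lt_pinfty (s := 1) bound) => [||| x x_in].
  + by rewrite oppr_le0 ltW.
  + by [].
  + exact: lexx.
  + by rewrite mul1r ler0_norm // derive1_u_le0.
Qed.

End boundary_behaviour.

Theorem mainTheorem8 (R : realType) (Q : R -> R) (A m u0 : R) (u : R -> R) (rbar : R) :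
  H_EL Q A m ->
  u0 \in setA Q ->
  is_solution_P Q u0 u rbar ->
  let K := powR (A * (m + 1) ^+ 2 / 2) (1 / (m + 1)) in
  [/\ (fun x => u x / (K * powR (rbar - x) (2 / (m + 1)))) x @[x --> rbar^'-] --> (1 : R),
      (fun x => (derive1 u) x / (- (2 / (m + 1)) * K * powR (rbar - x) (2 / (m + 1) - 1)))
         x @[x --> rbar^'-] --> (1 : R)
    & (@lebesgue_measure R).-integrable `]- rbar, rbar[ (fun x => (((derive1 u) x) ^+ 2)%:E)].
Proof.
move=> [Q_reg _ [A_gt0 m_gt1 m_lt3] Q_sim _] _
  [[rbar_gt0 u_cont] [u_gt0 u_out] u_ode [[u_0 u'_0] u_even] u_decr] K.
have Q_derivable s (s_gt0 : 0 < s) : derivable Q s 1 := (Q_reg s s_gt0).1.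
split.
- by apply: (u_sim (Q := Q) (u0 := u0)).
- by apply: (derive1_u_sim (Q := Q) (u0 := u0)).
- by apply: (integrable_sqr_derive1_u (Q := Q) (A := A) (m := m) (u0 := u0)).
Qed.
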